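(* For an integer $k\ge 2$, the graph $\Gamma_k$ is self color dual if and only if $k$ is a power of $2$.
   Context: Let $T_0(x)=x/2$ and $T_1(x)=(3x+1)/2$. For a positive integer $k$, $\Gamma_k$ is the directed graph on $\mathbb{Z}/k\mathbb{Z}$ with a black arrow $r\to s$ iff there exist positive integers $x\equiv r$, $y\equiv s\pmod k$ with $x$ even and $T_0(x)=y$, and a red arrow $r\to s$ iff there exist such $x,y$ with $x$ odd and $T_1(x)=y$. The color dual of a red/black edge-coloured digraph is obtained by swapping the colours of all arrows; the digraph is self color dual if there is a bijection $\rho$ of its vertex set such that for all vertices $u,w$: there is a black arrow $u\to w$ iff there is a red arrow $\rho(u)\to\rho(w)$, and there is a red arrow $u\to w$ iff there is a black arrow $\rho(u)\to\rho(w)$. *)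

From mathcomp Require Import all_boot.
Set Implicit Arguments. Unset Strict Implicit. Unset Printing Implicit Defensive.

(* Collatz-type maps on positive integers: T0 x = x/2 (x even), T1 x = (3x+1)/2 (x odd). *)

(* The graph Gamma_k on Z/kZ, vertices represented as residues 'I_k. *)

Definition black_arrow (k : nat) (r s : 'I_k) : Prop :=
  exists x y : nat, [/\ 0 < x, 0 < y, x %% k = r :> nat, y %% k = s :> nat &
                       ~~ odd x /\ x./2 = y].

Definition red_arrow (k : nat) (r s : 'I_k) : Prop :=
  exists x y : nat, [/\ 0 < x, 0 < y, x %% k = r :> nat, y %% k = s :> nat &
                       odd x /\ (3 * x + 1)./2 = y].

Definition self_color_dual (k : nat) : Prop :=
  exists rho : 'I_k -> 'I_k, bijective rho /\
    forall u w : 'I_k,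
      (black_arrow u w <-> red_arrow (rho u) (rho w)) /\
      (red_arrow u w <-> black_arrow (rho u) (rho w)).

From mathcomp Require Import all_boot zify.

(* Both colours have an arithmetic description: u -> w is black iff
   u = 2w (mod k), and red iff u = 2t + 1, w = 3t + 2 (mod k) for some t.

   (=>) Let rho swap the colours and write f(n) for rho(n mod k).  The black
   arrows 2n -> n give 3 f(2n) + 1 = 2 f(n), the red arrows 2t+1 -> 3t+2 give
   f(2t + 1) = 2 f(3t + 2), and the red loop at -1 gives f(-1) = 0 (mod k).
   Writing k = 2^a m with m odd, halving the first relation a times shows
   that f respects congruences modulo m; for t with 4t + 3 = 0 (mod m) the
   three relations then force 2 = 0 (mod m), hence m = 1.

   (<=) For k = 2^(a+1) the parity vector Q_n(x), whose bits are the
   parities of x, T x, ..., T^(n-1) x for the Collatz map T, determines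
   exactly the residue of x modulo 2^n, so Q_(a+1) permutes Z/k.  The arrow
   u -> w is black iff Q_(a+1)(u) = 2 Q_a(w) and red iff it is 2 Q_a(w) + 1;
   complementing all bits swaps these two relations, so the complement
   conjugated by Q_(a+1) is a colour duality. *)

(* Congruences as linear equations, the form in which [lia] can combine them. *)
Lemma eqn_modP d x y : x = y %[mod d] <-> exists p q, x + p * d = y + q * d.
Proof.
split=> [e | [p [q e]]]; last by rewrite -(modnMDl p) addnC e addnC modnMDl.
exists (y %/ d), (x %/ d).
rewrite {1}(divn_eq x d) {2}(divn_eq y d) e; lia.
Qed.

Lemma eqn_mod_dvdW {d k x y : nat} : d %| k -> x = y %[mod k] -> x = y %[mod d].
Proof. by move=> dk e; rewrite -(modn_dvdm x dk) e modn_dvdm. Qed.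

Lemma eqn_mod_mulK {c d x y : nat} :
  coprime d c -> c * x = c * y %[mod d] -> x = y %[mod d].
Proof.
move=> co.
wlog le_yx : x y / y <= x => [hwlog|].
  case/orP: (leq_total y x) => [/hwlog // | le_xy e].
  by apply/esym/(hwlog _ _ le_xy)/esym.
move/eqP; rewrite !eqn_mod_dvd ?leq_mul2l ?le_yx ?orbT // -mulnBr.
by rewrite Gauss_dvdr // => dv; apply/eqP; rewrite eqn_mod_dvd.
Qed.

Lemma modn_complement d z : z < 2 * d -> (2 * d - z.+1) %% d = d - (z %% d).+1.
Proof.
move=> lt_z2d; have d_gt0 : 0 < d by lia.
have [lt_zd | le_dz] := ltnP z d.
  rewrite (modn_small lt_zd) (_ : _ - _ = d - z.+1 + d) ?modnDr ?modn_small //; lia.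
rewrite -{2}(subnK le_dz) modnDr !modn_small //; lia.
Qed.

Lemma ord_mod k (u : 'I_k) x : u = x %[mod k] -> x %% k = u.
Proof. by move=> <-; rewrite modn_small. Qed.

Section ArrowArithmetic.
Variable k : nat.
Implicit Types u w : 'I_k.

Lemma black_arrowP u w : black_arrow u w <-> u = 2 * w %[mod k].
Proof.
split=> [[x [y [_ _ <- <- [/negPf ev <-]]]] | uw].
  by rewrite modnMmr !modn_mod -{1}(odd_double_half x) ev add0n mul2n.
have k_gt0 : 0 < k by case: k u {uw} => [[]|].
exists (2 * (w + k)), (w + k); split; rewrite ?addn_gt0 ?k_gt0 ?orbT //.
- by apply: ord_mod; rewrite uw mulnDr [_ + _]addnC modnMDl.
- by apply: ord_mod; rewrite modnDr.
- by split; lia.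
Qed.

Lemma red_arrowP u w :
  red_arrow u w <-> exists t, u = 2 * t + 1 %[mod k] /\ w = 3 * t + 2 %[mod k].
Proof.
split=> [[x [y [_ _ <- <- [odd_x <-]]]] | [t [ut wt]]].
  exists x./2; rewrite !modn_mod; split; congr (_ %% _); lia.
exists (2 * t + 1), (3 * t + 2); split; rewrite ?addn_gt0 ?orbT //.
- exact: ord_mod.
- exact: ord_mod.
- by split; lia.
Qed.

Lemma red_arrow_congr u w : red_arrow u w -> 3 * u + 1 = 2 * w %[mod k].
Proof.
case/red_arrowP=> t [ut wt].
rewrite -modnDml -modnMmr ut modnMmr modnDml -modnMmr wt modnMmr.
by congr (_ %% _); lia.
Qed.

End ArrowArithmetic.

Lemma two_eq0_mod {m x : nat} :
  x = 3 * x + 1 %[mod m] -> 2 * x = 1 %[mod m] -> 2 = 0 %[mod m].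
Proof.
move=> fix_x double_x; apply/eqP; rewrite -(eqn_modDl x) addn0; apply/eqP.
rewrite fix_x (_ : 3 * x + 1 = x + (2 * x + 1)); last by lia.
by rewrite -(modnDmr x (2 * x + 1)) -(modnDml (2 * x)) double_x modnDml modnDmr.
Qed.

Section ColourSwapForcesPowerOfTwo.
Variables (k : nat) (rho : 'I_k -> 'I_k).
Hypothesis k_gt0 : 0 < k.
Hypothesis rho_black : forall u w, black_arrow u w -> red_arrow (rho u) (rho w).
Hypothesis rho_red : forall u w, red_arrow u w -> black_arrow (rho u) (rho w).

Let res (n : nat) : 'I_k := Ordinal (ltn_pmod n k_gt0).
Let f (n : nat) : nat := rho (res n).

Lemma f_mod n : f (n %% k) = f n.
Proof. by congr (nat_of_ord (rho _)); apply: val_inj; rewrite /= modn_mod. Qed.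

(* The black arrow 2n -> n becomes a red arrow. *)
Lemma f_double n : 3 * f (2 * n) + 1 = 2 * f n %[mod k].
Proof.
by apply/red_arrow_congr/rho_black/black_arrowP; rewrite /= modn_mod modnMmr.
Qed.

(* The red arrow 2t + 1 -> 3t + 2 becomes a black arrow. *)
Lemma f_step t : f (2 * t + 1) = 2 * f (3 * t + 2) %[mod k].
Proof.
by apply/black_arrowP/rho_red/red_arrowP; exists t; rewrite /= !modn_mod.
Qed.

(* The red loop at -1 becomes a black loop, which only exists at 0. *)
Lemma f_minus_one : f (k - 1) = 0 %[mod k].
Proof.
have loop : red_arrow (res (k - 1)) (res (k - 1)).
  apply/red_arrowP; exists (k - 1); rewrite /= !modn_mod; split.
  - by rewrite -[in LHS](modnDr (k - 1) k); congr (_ %% _); lia.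
  - by rewrite -[in LHS](modnMDl 2 (k - 1) k); congr (_ %% _); lia.
move/black_arrowP/eqP: (rho_red _ _ loop); rewrite -/(f _) -{1}[f _]addn0 mul2n -addnn.
by rewrite eqn_modDl => /eqP.
Qed.

(* Halving 3 f(2n) + 1 = 2 f(n) shows that f respects congruences modulo
   every divisor d of k with k / d a power of 2. *)
Lemma f_congr_2adic {j d} :
  d * 2 ^ j = k -> forall x y, x = y %[mod d] -> f x = f y %[mod d].
Proof.
elim: j d => [|j IH] d def_k x y xy.
  by move: def_k xy; rewrite expn0 muln1 => ->; rewrite -[f x]f_mod -[f y]f_mod => ->.
have d_gt0 : 0 < d by move: k_gt0; rewrite -def_k muln_gt0 => /andP[].
have def_k2 : 2 * d * 2 ^ j = k by rewrite -def_k expnS; lia.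
have dvd_k : 2 * d %| k by rewrite -def_k2 dvdn_mulr.
have double_xy : 2 * x = 2 * y %[mod 2 * d] by rewrite -!muln_modr xy.
have f_double_xy := IH _ def_k2 _ _ double_xy.
have /eqP : 2 * f x = 2 * f y %[mod 2 * d].
  rewrite -(eqn_mod_dvdW dvd_k (f_double x)) -(eqn_mod_dvdW dvd_k (f_double y)).
  by rewrite -modnDml -modnMmr f_double_xy modnMmr modnDml.
by rewrite -!muln_modr eqn_pmul2l // => /eqP.
Qed.

(* The odd part m of k is 1: with b = 3t + 2 for 4t + 3 = 0 (mod m) and
   y = f(2b), the relations give y = f(2t + 1) = 2 f(b) = 3y + 1 and
   2y = 3 f(4b) + 1 = 3 f(-1) + 1 = 1 (mod m), which forces 2 = 0 (mod m). *)
Lemma odd_part_trivial {m a : nat} : m * 2 ^ a = k -> odd m -> m = 1.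
Proof.
move=> def_k m_odd; have [|m_gt1] := leqP m 1; first by lia.
have m_ge3 : 2 < m by lia.
have congr_m := f_congr_2adic def_k.
have mod_m n1 n2 : n1 = n2 %[mod k] -> n1 = n2 %[mod m].
  by apply: eqn_mod_dvdW; rewrite -def_k dvdn_mulr.
have [t root_t] : exists t, 4 * t + 3 = 0 %[mod m].
  have := divn_eq m 4; have : m %% 4 = 1 \/ m %% 4 = 3 by lia.
  by case=> m4 em; [exists (3 * (m %/ 4)) | exists (m %/ 4)];
     apply/eqn_modP; [exists 0, 3 | exists 0, 1]; lia.
set b := 3 * t + 2.
have double_b := mod_m _ _ (f_double b).
have step_t := mod_m _ _ (f_step t).
have congr_2b : f (2 * b) = f (2 * t + 1) %[mod m].
  apply: congr_m; rewrite (_ : 2 * b = 2 * t + 1 + (4 * t + 3)); last by rewrite /b; lia.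
  by rewrite -modnDmr root_t mod0n addn0.
have double_2b := mod_m _ _ (f_double (2 * b)).
have f_4b : f (2 * (2 * b)) = 0 %[mod m].
  rewrite (congr_m _ (k - 1)) ?(mod_m _ _ f_minus_one) //.
  apply/eqP; rewrite -(eqn_modDr 1) subnK //; apply/eqP.
  rewrite -def_k modnMr (_ : 2 * (2 * b) + 1 = 3 * (4 * t + 3)); last by rewrite /b; lia.
  by rewrite -modnMmr root_t mod0n muln0 mod0n.
have fixed_y : f (2 * b) = 3 * f (2 * b) + 1 %[mod m].
  by rewrite congr_2b step_t double_b.
have half_y : 2 * f (2 * b) = 1 %[mod m].
  by rewrite -double_2b -modnDml -modnMmr f_4b mod0n muln0 mod0n add0n.
by move/eqP: (two_eq0_mod fixed_y half_y); rewrite !modn_small // ltnW.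
Qed.

Lemma colour_swap_power_of_two : exists e, k = 2 ^ e.
Proof.
have [m m_odd def_k] := pfactor_coprime (isT : prime 2) k_gt0.
rewrite coprime2n in m_odd.
by exists (logn 2 k); rewrite {1}def_k (odd_part_trivial (esym def_k) m_odd) mul1n.
Qed.

End ColourSwapForcesPowerOfTwo.

Definition collatz (x : nat) : nat := if odd x then (3 * x + 1)./2 else x./2.

Fixpoint parity_vector (n x : nat) : nat :=
  if n is n'.+1 then odd x + 2 * parity_vector n' (collatz x) else 0.

Lemma collatz_half x : collatz x = if odd x then 3 * x./2 + 2 else x./2.
Proof. by rewrite /collatz; case: ifP => odd_x //; lia. Qed.

Lemma collatz_double n : collatz (2 * n) = n.
Proof. by rewrite /collatz; case: ifP; lia. Qed.

Lemma collatz_odd t : collatz (2 * t + 1) = 3 * t + 2.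
Proof. by rewrite /collatz; case: ifP; lia. Qed.

Lemma congr_double_mod d x y :
  x = y %[mod 2 * d] <-> odd x = odd y /\ x./2 = y./2 %[mod d].
Proof.
rewrite !eqn_modP; split=> [[p [q e]] | [e [p [q e']]]].
  by split; [lia | exists p, q; lia].
by exists p, q; lia.
Qed.

Lemma collatz_congr d x y : coprime d 3 ->
  x = y %[mod 2 * d] <-> odd x = odd y /\ collatz x = collatz y %[mod d].
Proof.
move=> co; rewrite congr_double_mod !collatz_half.
split=> -[odd_xy e]; split=> //; rewrite -odd_xy in e *; case: (odd x) e => // e.
  by rewrite -modnDml -modnMmr e modnMmr modnDml.
by apply: (eqn_mod_mulK co); apply/eqP; rewrite -(eqn_modDr 2); apply/eqP.
Qed.

Lemma parity_vector_lt n x : parity_vector n x < 2 ^ n.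
Proof.
elim: n x => [|n IH] x //=; have := IH (collatz x); rewrite expnS; lia.
Qed.

Lemma parity_vector_congr n x y :
  parity_vector n x = parity_vector n y <-> x = y %[mod 2 ^ n].
Proof.
elim: n x y => [|n IH] x y; first by rewrite expn0 !modn1.
rewrite expnS collatz_congr ?coprimeXl // -IH /=; lia.
Qed.

Lemma parity_vector_trunc n x : parity_vector n.+1 x %% 2 ^ n = parity_vector n x.
Proof.
elim: n x => [|n IH] x; first by rewrite modn1.
have := parity_vector_lt n (collatz x).
rewrite [parity_vector n.+2 x]/= expnS -modnDmr -muln_modr IH => lt_Q.
by rewrite modn_small //=; lia.
Qed.

Section PowerOfTwo.
Variable a : nat.
Notation K := (2 ^ a.+1).
Notation Q := parity_vector.

Lemma collatz_congr_K x y :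
  x = y %[mod K] <-> odd x = odd y /\ collatz x = collatz y %[mod 2 ^ a].
Proof. by rewrite expnS; apply: collatz_congr; rewrite coprimeXl. Qed.

(* In Gamma_K the arrows u -> w are read off the parity vectors: the first
   step of the orbit of u has the colour of the arrow, and the remaining a
   steps are those of the orbit of w. *)
Lemma black_arrow_parity (u w : 'I_K) : black_arrow u w <-> Q a.+1 u = 2 * Q a w.
Proof.
rewrite black_arrowP collatz_congr_K collatz_double oddM /= -parity_vector_congr.
lia.
Qed.

Lemma red_arrow_parity (u w : 'I_K) : red_arrow u w <-> Q a.+1 u = 2 * Q a w + 1.
Proof.
transitivity (odd u /\ collatz u = w %[mod 2 ^ a]);
  last by rewrite -parity_vector_congr /=; lia.
rewrite red_arrowP; split=> [[t [ut wt]] | [odd_u]].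
  have dvd_K : 2 ^ a %| K by rewrite expnS dvdn_mull.
  case/collatz_congr_K: ut; rewrite oddD oddM collatz_odd /= => -> ->.
  by split=> //; rewrite (eqn_mod_dvdW dvd_K wt).
rewrite collatz_half odd_u eqn_modP => -[p [q e]].
have eK := expnS 2 a.
exists (u./2 + (p + q) * 2 ^ a); rewrite !eqn_modP; split.
- by exists (p + q), 0; lia.
- by exists (p + 2 * q), 0; lia.
Qed.

(* Complementing parity vectors swaps the two colours, so conjugating the
   complement z |-> K - 1 - z of Z/K by the bijection Q_(a+1) gives the
   colour duality. *)
Lemma power_of_two_self_dual : self_color_dual K.
Proof.
pose q (x : 'I_K) : 'I_K := Ordinal (parity_vector_lt a.+1 x).
have q_inj : injective q.
  move=> x y /(congr1 val) Q_xy; apply: val_inj.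
  by move/parity_vector_congr: Q_xy; rewrite !modn_small.
pose rho x := invF q_inj (rev_ord (q x)).
have Q_rho x : Q a.+1 (rho x) = K - (Q a.+1 x).+1.
  by rewrite -[LHS]/(val (q (rho x))) /rho f_invF.
have rho_inv : involutive rho by move=> x; rewrite /rho f_invF rev_ordK invF_f.
exists rho; split=> [|u w]; first exact: inv_bij.
rewrite !black_arrow_parity !red_arrow_parity -!(parity_vector_trunc a) !Q_rho.
move: (parity_vector_lt a.+1 u) (parity_vector_lt a.+1 w).
move: (Q a.+1 u) (Q a.+1 w); rewrite expnS => z1 z2 lt_z1 lt_z2.
rewrite !modn_complement //.
have : z2 %% 2 ^ a < 2 ^ a by rewrite ltn_pmod ?expn_gt0.
move: (z2 %% 2 ^ a) => r lt_r; lia.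
Qed.

End PowerOfTwo.

Theorem mainTheorem17 (k : nat) (hk : 2 <= k) :
  self_color_dual k <-> exists e : nat, k = 2 ^ e.
Proof.
split=> [[rho [_ rho_swap]] | [[|e] def_k]].
- apply: (@colour_swap_power_of_two k rho (ltnW hk)) => u w.
  + exact: (rho_swap u w).1.1.
  + exact: (rho_swap u w).2.1.
- by rewrite def_k in hk.
- by rewrite def_k; exact: power_of_two_self_dual.
Qed.
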